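(* For all real $0\le a\le b\le 1$ and all $\epsilon\in(0,\tfrac12)$, $$\frac{(\sqrt b+\sqrt a)^{2(1+\epsilon)}+(\sqrt b-\sqrt a)^{2(1+\epsilon)}}{2}-a^{1+\epsilon}-b^{1+\epsilon}\ge (b^\epsilon-a^\epsilon)a.$$ *)

From Stdlib Require Import Reals.
Open Scope R_scope.

(* Real power x^y for x >= 0 and y > 0, with the standard convention 0^y = 0.
   (Stdlib's Rpower x y = exp (y * ln x) would give 1 at x = 0.) *)
Definition rpow (x y : R) : R := if Req_EM_T x 0 then 0 else Rpower x y.

(* Write s = sqrt b, t = sqrt a and p = 1 + eps.  Since u |-> u^p is convex for p >= 1,
   the mean of (s+t)^(2p) and (s-t)^(2p) is at least the p-th power of the mean of
   (s+t)^2 and (s-t)^2, which is a + b.  Finally (a+b)^p = (a+b) (a+b)^eps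
   >= (a+b) b^eps, and subtracting a^p = a a^eps and b^p = b b^eps leaves
   (b^eps - a^eps) a. *)

From Stdlib Require Import Reals Lra.
Open Scope R_scope.

Lemma rpow_0l y : rpow 0 y = 0.
Proof. unfold rpow; destruct (Req_EM_T 0 0); [reflexivity|lra]. Qed.

Lemma rpow_Rpower x y : 0 < x -> rpow x y = Rpower x y.
Proof. intros Hx; unfold rpow; destruct (Req_EM_T x 0); [lra|reflexivity]. Qed.

Lemma rpow_ge0 x y : 0 <= rpow x y.
Proof. unfold rpow; destruct (Req_EM_T x 0); [lra|left; apply exp_pos]. Qed.

Lemma rpow_mult_distr x y p : 0 <= x -> 0 <= y -> rpow (x * y) p = rpow x p * rpow y p.
Proof.
  intros [Hx|<-] [Hy|<-]; rewrite ?Rmult_0_l, ?Rmult_0_r, ?rpow_0l; try ring.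
  rewrite !rpow_Rpower by nra; symmetry; apply Rpower_mult_distr; lra.
Qed.

Lemma rpow_1_plus x e : 0 <= x -> rpow x (1 + e) = x * rpow x e.
Proof.
  intros [Hx|<-]; [|rewrite !rpow_0l; ring].
  rewrite !rpow_Rpower, Rpower_plus, Rpower_1 by lra; ring.
Qed.

Lemma rpow_sqr s p : 0 <= s -> rpow s (2 * p) = rpow (s * s) p.
Proof.
  intros [Hs|<-]; [|rewrite Rmult_0_l, !rpow_0l; reflexivity].
  rewrite !rpow_Rpower by nra.
  rewrite <- Rpower_mult; f_equal.
  replace 2 with (1 + 1) by ring; rewrite Rpower_plus, Rpower_1 by lra; reflexivity.
Qed.

Lemma rpow_le_compat_l x y p : 0 <= p -> 0 <= x <= y -> rpow x p <= rpow y p.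
Proof.
  intros Hp [[Hx|<-] Hxy]; [|rewrite rpow_0l; apply rpow_ge0].
  rewrite !rpow_Rpower by lra; apply Rle_Rpower_l; lra.
Qed.

(* Comparison with the tangent line of exp at the convex combination itself. *)
Lemma exp_convex l A B : 0 <= l <= 1 ->
  exp (l * A + (1 - l) * B) <= l * exp A + (1 - l) * exp B.
Proof.
  intros Hl; set (M := l * A + (1 - l) * B).
  assert (HA : exp A = exp M * exp (A - M)) by (rewrite <- exp_plus; f_equal; ring).
  assert (HB : exp B = exp M * exp (B - M)) by (rewrite <- exp_plus; f_equal; ring).
  pose proof (exp_ineq1_le (A - M)); pose proof (exp_ineq1_le (B - M)).
  pose proof (exp_pos M).
  assert (exp M * (1 + (A - M)) <= exp A) by (rewrite HA; nra).
  assert (exp M * (1 + (B - M)) <= exp B) by (rewrite HB; nra).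
  assert (Hcomb : l * (exp M * (1 + (A - M))) + (1 - l) * (exp M * (1 + (B - M))) = exp M)
    by (unfold M; ring).
  nra.
Qed.

(* w = exp (1/p * (p ln w) + (1 - 1/p) * 0) <= w^p / p + 1 - 1/p. *)
Lemma rpow_bernoulli w p : 1 <= p -> 0 <= w -> 1 + p * (w - 1) <= rpow w p.
Proof.
  intros Hp [Hw|<-]; [|rewrite rpow_0l; lra].
  rewrite rpow_Rpower by lra; unfold Rpower.
  assert (Hl : 0 <= / p <= 1).
  { split; [left; apply Rinv_0_lt_compat; lra|].
    rewrite <- Rinv_1; apply Rinv_le_contravar; lra. }
  pose proof (exp_convex (/ p) (p * ln w) 0 Hl) as Hcvx.
  replace (/ p * (p * ln w) + (1 - / p) * 0) with (ln w) in Hcvx by (field; lra).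
  rewrite exp_ln, exp_0 in Hcvx by lra.
  apply (Rmult_le_compat_l p) in Hcvx; [|lra].
  replace (p * (/ p * exp (p * ln w) + (1 - / p) * 1)) with (exp (p * ln w) + (p - 1))
    in Hcvx by (field; lra).
  lra.
Qed.

(* Scale by the midpoint m: u^p + v^p = m^p ((u/m)^p + (v/m)^p), then apply Bernoulli twice. *)
Lemma rpow_midpoint_convex u v p : 1 <= p -> 0 <= u -> 0 <= v ->
  2 * rpow ((u + v) / 2) p <= rpow u p + rpow v p.
Proof.
  intros Hp Hu Hv.
  set (m := (u + v) / 2).
  destruct (Req_dec m 0) as [Hm0|Hm0].
  { replace u with 0 by (unfold m in Hm0; lra); replace v with 0 by (unfold m in Hm0; lra).
    rewrite Hm0, !rpow_0l; lra. }
  assert (Hm : 0 < m) by (unfold m in *; lra).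
  assert (Hdiv : forall x, 0 <= x -> 0 <= x / m).
  { intros x Hx; unfold Rdiv; apply Rmult_le_pos; [lra|left; apply Rinv_0_lt_compat; lra]. }
  assert (Hscale : forall x, 0 <= x -> rpow x p = rpow m p * rpow (x / m) p).
  { intros x Hx; rewrite <- rpow_mult_distr by (auto; lra); f_equal; field; lra. }
  rewrite (Hscale u), (Hscale v) by assumption.
  pose proof (rpow_bernoulli (u / m) p Hp (Hdiv _ Hu)).
  pose proof (rpow_bernoulli (v / m) p Hp (Hdiv _ Hv)).
  assert (Hsum : p * (u / m - 1) + p * (v / m - 1) = 0).
  { replace v with (2 * m - u) by (unfold m; field); field; lra. }
  pose proof (rpow_ge0 m p).
  nra.
Qed.

Theorem mainTheorem6 (a b eps : R) :
  0 <= a -> a <= b -> b <= 1 -> 0 < eps -> eps < 1/2 ->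
  (rpow (sqrt b + sqrt a) (2 * (1 + eps)) + rpow (sqrt b - sqrt a) (2 * (1 + eps))) / 2
    - rpow a (1 + eps) - rpow b (1 + eps)
  >= (rpow b eps - rpow a eps) * a.
Proof.
  intros Ha Hab _ Heps _.
  pose proof (sqrt_pos a); pose proof (sqrt_le_1_alt a b Hab).
  pose proof (sqrt_sqrt a Ha); pose proof (sqrt_sqrt b ltac:(lra)).
  assert (Hmean : ((sqrt b + sqrt a) * (sqrt b + sqrt a)
                   + (sqrt b - sqrt a) * (sqrt b - sqrt a)) / 2 = a + b) by nra.
  pose proof (rpow_midpoint_convex ((sqrt b + sqrt a) * (sqrt b + sqrt a))
                 ((sqrt b - sqrt a) * (sqrt b - sqrt a)) (1 + eps)
                 ltac:(lra) ltac:(nra) ltac:(nra)) as Hcvx.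
  rewrite Hmean in Hcvx.
  rewrite !rpow_sqr by lra.
  rewrite (rpow_1_plus (a + b)) in Hcvx by lra.
  rewrite (rpow_1_plus a), (rpow_1_plus b) by lra.
  assert (Hmono : rpow b eps <= rpow (a + b) eps) by (apply rpow_le_compat_l; lra).
  pose proof (rpow_ge0 b eps).
  nra.
Qed.
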